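(* Let $I$ be the tridendriform ideal of $\mathcal{A}$ generated by $\{x\cdot y: x,y\in\mathcal{A}^+\}$. Then $I$ is a $(3,2)$-dendriform biideal of $(\mathcal{A},\prec,\cdot,\succ,\Delta_\leftarrow,\Delta_\rightarrow)$: it is a tridendriform ideal, $\varepsilon(I)=0$, and $\Delta_\leftarrow(I)\subseteq I\otimes\mathcal{A}+\mathcal{A}\otimes I$, $\Delta_\rightarrow(I)\subseteq I\otimes\mathcal{A}+\mathcal{A}\otimes I$.
   Context: Trees: planar rooted trees in which every internal vertex has at least two children; the root vertex hangs from a trunk edge; leaves are edges without upper vertex; $|$ is the one-leaf tree; $\mathcal A$ is the $\mathbb K$-span of all trees, $\mathcal A^+$ that of trees $\neq|$. Products: $x_0\vee\cdots\vee x_k$ ($k\ge1$) grafts trees left to right on a new root; for $x=x^{(0)}\vee\cdots\vee x^{(k)}$, $y=y^{(0)}\vee\cdots\vee y^{(l)}$: $x\prec y=x^{(0)}\vee\cdots\vee x^{(k-1)}\vee(x^{(k)}*y)$, $x\cdot y=x^{(0)}\vee\cdots\vee x^{(k-1)}\vee(x^{(k)}*y^{(0)})\vee y^{(1)}\vee\cdots\vee y^{(l)}$, $x\succ y=(x*y^{(0)})\vee y^{(1)}\vee\cdots\vee y^{(l)}$, $*=\prec+\cdot+\succ$, $|*z=z*|=z$; for $a\in\mathcal A^+$: $|\prec a=0$, $a\prec|=a$, $|\succ a=a$, $a\succ|=0$, $|\cdot a=a\cdot|=0$. $\varepsilon(|)=1$, $\varepsilon(\mathcal A^+)=0$. A tridendriform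 ideal is a subspace $J$ such that $x\ltimes y\in J$ whenever $x\in J$ or $y\in J$ (and the product is defined), for $\ltimes\in\{\prec,\cdot,\succ\}$. Admissible cuts: internal edges join two internal vertices; a cut is a nonempty set of internal edges, plus the empty and total (below the root) cuts; admissible if every root-to-leaf path meets at most one chosen edge; $P^c(t)$ the component containing the root, $G^c(t)$ the $*$-product of the cut-off trees from left to right (empty cut: $P^c=t,G^c=|$; total cut: $P^c=|,G^c=t$). For $t\ne|$: $\Delta_\leftarrow(t)=\sum G^c(t)\otimes P^c(t)$ over admissible cuts with the right-most leaf of $t$ not in $P^c(t)$, $\Delta_\rightarrow(t)$ the sum over the other admissible cuts. *)

From HB Require Import structures.
From mathcomp Require Import all_boot all_order all_algebra.
From mathcomp Require Import freeg.
Set Implicit Arguments. Unset Strict Implicit. Unset Printing Implicit Defensive.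
Import GRing.Theory.
Local Open Scope ring_scope.

(* Planar rooted trees in which every internal vertex has at least two children.
   [Leaf] is the one-leaf tree |; [Node x0 x1 xs] = x0 \/ x1 \/ ... (children
   x0 :: x1 :: xs, from left to right), so at least two children structurally. *)
Inductive ptree : Type :=
| Leaf : ptree
| Node : ptree -> ptree -> seq ptree -> ptree.

Fixpoint ptree_enc (t : ptree) : GenTree.tree unit :=
  match t with
  | Leaf => GenTree.Node 0 [::]
  | Node a b s => GenTree.Node 1 (ptree_enc a :: ptree_enc b :: map ptree_enc s)
  end.
Fixpoint ptree_dec (g : GenTree.tree unit) : ptree :=
  match g with
  | GenTree.Node 1 (ga :: gb :: gs) => Node (ptree_dec ga) (ptree_dec gb) (map ptree_dec gs)
  | _ => Leaf
  end.
Fixpoint ptree_encK (t : ptree) : ptree_dec (ptree_enc t) = t :=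
  match t return ptree_dec (ptree_enc t) = t with
  | Leaf => erefl
  | Node a b s =>
      f_equal3 Node (ptree_encK a) (ptree_encK b)
        ((fix go (s : seq ptree) : map ptree_dec (map ptree_enc s) = s :=
            match s return map ptree_dec (map ptree_enc s) = s with
            | [::] => erefl
            | x :: s' => f_equal2 cons (ptree_encK x) (go s')
            end) s)
  end.
Lemma ptree_encK' : cancel ptree_enc ptree_dec. Proof. exact: ptree_encK. Qed.
HB.instance Definition _ := Equality.copy ptree (can_type ptree_encK').
HB.instance Definition _ := Countable.copy ptree (can_type ptree_encK').

Definition graft (cs : seq ptree) : ptree :=
  match cs with a :: b :: r => Node a b r | _ => Leaf (* unused junk *) end.

(* number of vertices + leaves; used only as fuel *)
Fixpoint tsize (t : ptree) : nat :=
  match t with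
  | Leaf => 1
  | Node a b s => (tsize a + tsize b + sumn (map tsize s)).+1
  end.

Section Alg.
Variable K : fieldType.

(* the vector space A = K-span of all trees; A (x) A = K-span of pairs of trees *)
Definition A := {freeg ptree / K}.
Definition A2 := {freeg (ptree * ptree) / K}.
Definition bt (t : ptree) : A := << t >>.

(* (x < y, x . y, x > y) on trees, computed with fuel *)
Fixpoint tri (n : nat) (x y : ptree) : A * A * A :=
  match n with
  | 0 => (0, 0, 0)
  | n'.+1 =>
    let st u v :=
      match u, v with
      | Leaf, _ => bt v
      | _, Leaf => bt u
      | _, _ => let: (p, d, s) := tri n' u v in p + d + s
      end in
    match x, y with
    | Node a b s, Node c d r =>
        let xk := last b s in
        let ini := belast a (b :: s) in
        (fglift (fun z => bt (graft (rcons ini z))) (st xk y),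
         fglift (fun z => bt (graft (ini ++ z :: d :: r))) (st xk c),
         fglift (fun z => bt (graft (z :: d :: r))) (st x c))
    | Leaf, Node _ _ _ => (0, 0, bt y)
    | Node _ _ _, Leaf => (bt x, 0, 0)
    | Leaf, Leaf => (0, 0, 0)            (* undefined in the paper; junk *)
    end
  end.

Definition prec_t (x y : ptree) : A := (tri (tsize x + tsize y) x y).1.1.
Definition dot_t (x y : ptree) : A := (tri (tsize x + tsize y) x y).1.2.
Definition succ_t (x y : ptree) : A := (tri (tsize x + tsize y) x y).2.
Definition star_t (x y : ptree) : A :=
  match x, y with
  | Leaf, _ => bt y
  | _, Leaf => bt x
  | _, _ => prec_t x y + dot_t x y + succ_t x y
  end.

Definition bilin (f : ptree -> ptree -> A) (u v : A) : A :=
  fglift (fun s => fglift (fun t => f s t) v) u.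
Definition precv := bilin prec_t.
Definition dotv := bilin dot_t.
Definition succv := bilin succ_t.
Definition starv := bilin star_t.

Definition tens (u v : A) : A2 :=
  fglift (fun s => fglift (fun t => (<< (s, t) >> : A2)) v) u.

Definition eps (v : A) : K := coeff Leaf v.
Definition inAplus (v : A) : Prop := coeff Leaf v = 0.

(* non-total admissible cuts of a tree (the empty cut included), as triples
   (P^c(t), list of cut-off trees from left to right, "right-most leaf of t
   lies in P^c(t)").  A cut edge must be internal: it goes to a child that is
   an internal vertex. *)
Fixpoint cprod (X : Type) (ls : seq (seq X)) : seq (seq X) :=
  match ls with
  | [::] => [:: [::]]
  | l :: ls' => [seq x :: y | x <- l, y <- cprod ls']
  end.

Definition combine_cut (l : seq (ptree * seq ptree * bool)) :=
  (graft [seq c.1.1 | c <- l], flatten [seq c.1.2 | c <- l], last true [seq c.2 | c <- l]).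

Fixpoint cuts (t : ptree) : seq (ptree * seq ptree * bool) :=
  match t with
  | Leaf => [:: (Leaf, [::], true)]
  | Node a b s =>
      let opt c := (if c is Node _ _ _ then [:: (Leaf, [:: c], false)] else [::])
                   ++ cuts c in
      [seq combine_cut l | l <- cprod (opt a :: opt b :: map opt s)]
  end.

Definition Gprod (gs : seq ptree) : A := foldr (fun t acc => starv (bt t) acc) (bt Leaf) gs.

(* Delta_<- and Delta_-> on trees t <> | (junk value 0 on |) *)
Definition DeltaL_t (t : ptree) : A2 :=
  if t is Leaf then 0 else
  tens (bt t) (bt Leaf) (* total cut *)
  + \sum_(c <- cuts t | ~~ c.2) tens (Gprod c.1.2) (bt c.1.1).
Definition DeltaR_t (t : ptree) : A2 :=
  if t is Leaf then 0 else
  \sum_(c <- cuts t | c.2) tens (Gprod c.1.2) (bt c.1.1).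
Definition DeltaL (v : A) : A2 := fglift DeltaL_t v.
Definition DeltaR (v : A) : A2 := fglift DeltaR_t v.

(* tridendriform ideal: a subspace J such that x <| y in J whenever x in J or
   y in J and the product is defined (i.e. not both x and y have a | part) *)
Definition tri_ideal (J : A -> Prop) : Prop :=
  [/\ J 0, (forall u v, J u -> J v -> J (u + v)), (forall (k : K) u, J u -> J (k *: u)) &
   forall x y, (inAplus x \/ inAplus y) -> (J x \/ J y) ->
     [/\ J (precv x y), J (dotv x y) & J (succv x y)]].

Definition gen_ideal (v : A) : Prop :=
  forall J, tri_ideal J -> (forall x y, inAplus x -> inAplus y -> J (dotv x y)) -> J v.

Definition tens_sum (J : A -> Prop) (w : A2) : Prop :=
  exists l : seq (A * A), (forall p, p \in l -> J p.1 \/ J p.2) /\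
    w = \sum_(p <- l) tens p.1 p.2.

End Alg.

(* Let N be the span of the non-binary trees, those with a vertex of at least
   three children; then I = N.  N is a tridendriform ideal containing every
   x . y: the product . merges two root lists into one of length at least three,
   and < and > graft onto a non-binary tree (or a subtree of one) without
   destroying its wide vertex.  Conversely every non-binary tree lies in I: it
   is x . y when its root has at least three children, and x > y or x < y with
   a non-binary factor in I otherwise.  Hence eps(I) = 0, since | is binary.
   For the coproducts, in every admissible cut of a non-binary tree either the
   trunk P^c(t) or one of the cut-off trees is non-binary, and G^c(t) lies in N
   as soon as one of its factors does, so every term G^c(t) (x) P^c(t) lies in
   I (x) A + A (x) I. *)
From Pilot Require Import Defs.
From HB Require Import structures.
From mathcomp Require Import all_boot all_order all_algebra.
From mathcomp Require Import freeg.
Set Implicit Arguments. Unset Strict Implicit. Unset Printing Implicit Defensive.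
Import GRing.Theory.
Local Open Scope ring_scope.

HB.instance Definition _ (R : nzRingType) (M : lmodType R) (T : choiceType) (f : T -> M) :=
  GRing.isZmodMorphism.Build {freeg T / R} M (fglift f) (lift_is_additive f).

Section FreegLift.
Variables (R : nzRingType) (T : choiceType).

Lemma fgliftE (M : lmodType R) (f : T -> M) (D : {freeg T / R}) :
  fglift f D = \sum_(z <- dom D) coeff z D *: f z.
Proof.
rewrite -{1}(freeg_sumE D) raddf_sum; apply: eq_bigr => z _; exact: liftU.
Qed.

Lemma fgliftZ (M : lmodType R) (f : T -> M) (c : R) (D : {freeg T / R}) :
  fglift f (c *: D) = c *: fglift f D.
Proof.
rewrite -[c *: D]/(fgscale c D) /fgscale raddf_sum (fgliftE f D) scaler_sumr.
apply: eq_bigr => z _; rewrite scalerA; exact: liftU.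
Qed.

Lemma fglift_freegU (D : {freeg T / R}) : fglift (fun z => << z >>) D = D.
Proof.
rewrite fgliftE -[RHS]freeg_sumE; apply: eq_bigr => z _.
by apply/eqP/freeg_eqP => x; rewrite coeffZ !coeffU mul1r.
Qed.

Lemma rpred_fglift (M : lmodType R) (S : submodClosed M) (f : T -> M) (D : {freeg T / R}) :
  {in dom D, forall z, f z \in S} -> fglift f D \in S.
Proof.
by move=> fS; rewrite fgliftE big_seq rpred_sum // => z /fS; apply: rpredZ.
Qed.

End FreegLift.

Fixpoint nonbinary (t : ptree) : bool :=
  if t is Node a b s then [|| s != [::], nonbinary a, nonbinary b | has nonbinary s]
  else false.

Lemma nonbinary_graft l :
  (1 < size l)%N -> nonbinary (graft l) = (2 < size l)%N || has nonbinary l.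
Proof. by case: l => [|a [|b s]] //= _; rewrite !ltnS lt0n size_eq0 !orbA. Qed.

Lemma nonbinary_graft_rcons ini z : (0 < size ini)%N ->
  nonbinary (graft (rcons ini z)) = [|| (1 < size ini)%N, nonbinary z | has nonbinary ini].
Proof. by move=> ini0; rewrite nonbinary_graft size_rcons ?ltnS // has_rcons. Qed.

Lemma Node_graft_rcons a b s : Node a b s = graft (rcons (belast a (b :: s)) (last b s)).
Proof. by rewrite -[last b s]/(last a (b :: s)) -lastI. Qed.

Lemma tsize_child x l : x \in l -> (Defs.tsize x <= sumn (map Defs.tsize l))%N.
Proof.
elim: l => //= y l IH; rewrite inE => /predU1P [->|/IH le_x]; first exact: leq_addr.
exact: leq_trans le_x (leq_addl _ _).
Qed.

Lemma ptree_ind_children (P : ptree -> Prop) : P Leaf ->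
  (forall a b s, {in a :: b :: s, forall x, P x} -> P (Node a b s)) -> forall t, P t.
Proof.
move=> PL PN t; elim: (Defs.tsize t).+1 {-2}t (ltnSn (Defs.tsize t)) => // n IH [//|a b s] lt_n.
apply: PN => x /tsize_child le_x; apply: IH; apply: leq_ltn_trans le_x _.
by rewrite /= addnA -ltnS.
Qed.

Lemma has_flatten (X : Type) (P : pred X) (ss : seq (seq X)) :
  has P (flatten ss) = has (has P) ss.
Proof. by elim: ss => //= s ss IH; rewrite has_cat IH. Qed.

Lemma size_cprod (X : eqType) (Ls : seq (seq X)) l : l \in cprod Ls -> size l = size Ls.
Proof.
elim: Ls l => [|L Ls IH] l /=; first by rewrite inE => /eqP ->.
by case/allpairsP => [[x y] [_ /IH /= <- ->]].
Qed.

Lemma has_cprod (X : eqType) (P : pred X) (Ls : seq (seq X)) l :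
  l \in cprod Ls -> has (all P) Ls -> has P l.
Proof.
elim: Ls l => [|L Ls IH] l //=; case/allpairsP => [[x y] [xL yLs ->]] /=.
by case/orP => [/allP/(_ x xL) -> // | /(IH _ yLs) ->]; rewrite orbT.
Qed.

(* The local [opt] of [cuts]: cut the edge to an internal child, or cut inside it. *)
Definition child_cuts (c : ptree) : seq (ptree * seq ptree * bool) :=
  (if c is Node _ _ _ then [:: (Leaf, [:: c], false)] else [::]) ++ cuts c.

Lemma cuts_Node a b s :
  cuts (Node a b s) = [seq combine_cut l | l <- cprod (map child_cuts (a :: b :: s))].
Proof. by []. Qed.

Definition cut_nonbinary (c : ptree * seq ptree * bool) : bool :=
  nonbinary c.1.1 || has nonbinary c.1.2.

Lemma cut_nonbinary_combine l : (1 < size l)%N ->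
  cut_nonbinary (combine_cut l) = (2 < size l)%N || has cut_nonbinary l.
Proof.
move=> l2; rewrite /cut_nonbinary /= nonbinary_graft size_map // -orbA has_map.
by rewrite has_flatten has_map -has_predU.
Qed.

Lemma cuts_nonbinary t : nonbinary t -> all cut_nonbinary (cuts t).
Proof.
elim/ptree_ind_children: t => // a b s IH abs; rewrite cuts_Node all_map.
apply/allP => l abs_l /=; have size_l := size_cprod abs_l; rewrite size_map in size_l.
rewrite cut_nonbinary_combine size_l //; move: abs.
rewrite -[Node a b s]/(graft (a :: b :: s)) nonbinary_graft // => /orP [-> // | ].
case/hasP => ch ch_abs ch_nb; apply/orP; right; apply: has_cprod abs_l _.
apply/hasP; exists (child_cuts ch); first exact: map_f.
rewrite all_cat IH // andbT; case: ch {ch_abs} ch_nb => //= ch1 ch2 chs ch_nb.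
by rewrite /cut_nonbinary /= ch_nb.
Qed.

Definition nonbinary_span (K : fieldType) : {pred A K} := fun v => all nonbinary (dom v).

Lemma nonbinary_span_closed (K : fieldType) : subsemimod_closed (@nonbinary_span K).
Proof.
split; first split.
- by rewrite unfold_in dom0.
- move=> u v /allP uS /allP vS; apply/allP => t /domD_subset.
  by rewrite mem_cat => /orP [/uS|/vS].
- by move=> k v /allP vS; apply/allP => t /domZ_subset /vS.
Qed.

HB.instance Definition _ (K : fieldType) :=
  GRing.isSubSemiModClosed.Build K (A K) (@nonbinary_span K) (nonbinary_span_closed K).

Section NonbinarySpan.
Variable K : fieldType.
Local Notation A := (A K).
Local Notation bt := (bt K).
Local Notation S := (@nonbinary_span K).

Lemma nonbinary_spanP (v : A) : reflect {in dom v, forall t, nonbinary t} (v \in S).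
Proof. exact: allP. Qed.

Lemma bt_in_nonbinary_span t : (bt t \in S) = nonbinary t.
Proof. by rewrite unfold_in /bt domU1 /= andbT. Qed.

Lemma rpred_bilin f (u v : A) :
  {in dom u & dom v, forall s t, f s t \in S} -> bilin f u v \in S.
Proof. by move=> fS; apply: rpred_fglift => s us; apply: rpred_fglift => t; apply: fS. Qed.

Lemma rpred_fglift_bt (G : ptree -> ptree) (w : A) :
  {in dom w, forall z, nonbinary (G z)} -> fglift (fun z => bt (G z)) w \in S.
Proof. by move=> GS; apply: rpred_fglift => z /GS; rewrite bt_in_nonbinary_span. Qed.

(* The local [st] of [tri] at fuel [n], so that [tri_NodeE] holds by conversion. *)
Definition star_fuel n (u v : ptree) : A :=
  match u, v with
  | Leaf, _ => bt v
  | _, Leaf => bt u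
  | _, _ => let: (p, d, s) := tri K n u v in p + d + s
  end.

Lemma tri_NodeE n a b s c d r :
  tri K n.+1 (Node a b s) (Node c d r) =
  let ini := belast a (b :: s) in
  (fglift (fun z => bt (graft (rcons ini z))) (star_fuel n (last b s) (Node c d r)),
   fglift (fun z => bt (graft (ini ++ z :: d :: r))) (star_fuel n (last b s) c),
   fglift (fun z => bt (graft (z :: d :: r))) (star_fuel n (Node a b s) c)).
Proof. by []. Qed.

Lemma tri_dot_nonbinary n x y : (tri K n x y).1.2 \in S.
Proof.
case: n x y => [|n] [|a b s] [|c d r]; rewrite ?rpred0 //.
rewrite tri_NodeE; apply: rpred_fglift_bt => z _.
by rewrite nonbinary_graft size_cat /= size_belast addnS ltnS ?addnS ?ltnS.
Qed.

Lemma star_fuel_nonbinary n u v :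
  (forall x y, nonbinary x || nonbinary y -> (tri K n x y).1.1 \in S /\ (tri K n x y).2 \in S) ->
  nonbinary u || nonbinary v -> star_fuel n u v \in S.
Proof.
move=> triS; case: u => [|a b s]; case: v => [|c d r] uv; rewrite /star_fuel.
- by move: uv.
- by rewrite bt_in_nonbinary_span.
- by rewrite bt_in_nonbinary_span -[nonbinary _]orbF.
have [precS succS] := triS _ _ uv; have dotS := tri_dot_nonbinary n (Node a b s) (Node c d r).
by case: (tri K n _ _) precS dotS succS => [[p q] w] /= pS qS wS; rewrite !rpredD.
Qed.

Lemma tri_nonbinary n x y : nonbinary x || nonbinary y ->
  (tri K n x y).1.1 \in S /\ (tri K n x y).2 \in S.
Proof.
elim: n x y => [|n IH] x y xy; first by rewrite !rpred0.
case: x xy => [|a b s]; case: y => [|c d r] xy; last rewrite tri_NodeE.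
- by rewrite /= rpred0.
- by rewrite /= rpred0 bt_in_nonbinary_span.
- by rewrite /= rpred0 bt_in_nonbinary_span -[nonbinary _]orbF.
set ini := belast a (b :: s); have ini0 : (0 < size ini)%N by rewrite size_belast.
have x_ini : nonbinary (Node a b s) =
    [|| (1 < size ini)%N, nonbinary (last b s) | has nonbinary ini].
  by rewrite Node_graft_rcons nonbinary_graft_rcons.
split; apply: rpred_fglift_bt => z zst.
- rewrite nonbinary_graft_rcons //.
  have [xk_y | ] := boolP (nonbinary (last b s) || nonbinary (Node c d r)).
    by move/nonbinary_spanP: (star_fuel_nonbinary IH xk_y) => /(_ z zst) ->; rewrite orbT.
  case/norP=> /negbTE xk /negbTE y.
  by move: xy; rewrite y orbF x_ini xk => /or3P [-> | // | ->]; rewrite ?orbT.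
- have [x_c | ] := boolP (nonbinary (Node a b s) || nonbinary c).
    by move/nonbinary_spanP: (star_fuel_nonbinary IH x_c) => /(_ z zst) /= ->; rewrite orbT.
  case/norP=> /negbTE x /negbTE cb; move: xy; rewrite x /= cb.
  by case/or4P=> [-> | // | -> | ->]; rewrite ?orbT.
Qed.

Lemma prec_t_nonbinary x y : nonbinary x || nonbinary y -> prec_t K x y \in S.
Proof. by case/(tri_nonbinary (Defs.tsize x + Defs.tsize y)). Qed.

Lemma succ_t_nonbinary x y : nonbinary x || nonbinary y -> succ_t K x y \in S.
Proof. by case/(tri_nonbinary (Defs.tsize x + Defs.tsize y)). Qed.

Lemma dot_t_nonbinary x y : dot_t K x y \in S.
Proof. exact: tri_dot_nonbinary. Qed.

Lemma star_t_nonbinary x y : nonbinary x || nonbinary y -> star_t K x y \in S.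
Proof.
case: x => [|a b s]; case: y => [|c d r] xy; rewrite /star_t ?bt_in_nonbinary_span //.
- by rewrite -[nonbinary _]orbF.
by rewrite !rpredD ?prec_t_nonbinary ?succ_t_nonbinary ?dot_t_nonbinary.
Qed.

Lemma tri_ideal_nonbinary_span : tri_ideal (fun v : A => v \in S).
Proof.
split=> [|u v|k u|x y _ xy]; [exact: rpred0 | exact: rpredD | exact: rpredZ |].
have nbS f : (forall s t, nonbinary s || nonbinary t -> f s t \in S) -> bilin f x y \in S.
  move=> fS; apply: rpred_bilin => s t xs yt; apply: fS.
  by case: xy => /nonbinary_spanP nbS; [rewrite (nbS s) | rewrite (nbS t) ?orbT].
split.
- by apply: nbS => s t; apply: prec_t_nonbinary.
- by apply: rpred_bilin => s t _ _; apply: dot_t_nonbinary.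
- by apply: nbS => s t; apply: succ_t_nonbinary.
Qed.

Lemma Gprod_nonbinary gs : has nonbinary gs -> Gprod K gs \in S.
Proof.
elim: gs => //= t gs IH t_gs; apply: rpred_bilin => _ u /[1!domU1] /[1!inE] /eqP-> ugs.
apply: star_t_nonbinary; case/orP: t_gs => [-> // | /IH /nonbinary_spanP gsS].
by rewrite (gsS u) ?orbT.
Qed.

End NonbinarySpan.

Section GeneratedIdeal.
Variable K : fieldType.
Local Notation A := (A K).
Local Notation bt := (bt K).
Local Notation I := (@gen_ideal K).
Local Notation S := (@nonbinary_span K).

Lemma gen_ideal_tri : tri_ideal I.
Proof.
split=> [J [] // | u v uI vI J JI gJ | k u uI J JI gJ | x y xy uv].
- by case: (JI) => _ JD _ _; apply: JD; [apply: uI | apply: vI].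
- by case: (JI) => _ _ JZ _; apply: JZ; apply: uI.
split=> J JI gJ.
all: have xyJ : J x \/ J y by case: uv => [xI | yI]; [left; apply: xI | right; apply: yI].
all: by case: JI => _ _ _ /(_ x y xy xyJ) [].
Qed.

Lemma tri_ideal_fglift (J : A -> Prop) (T : choiceType) (f : T -> A) (w : {freeg T / K}) :
  tri_ideal J -> {in dom w, forall z, J (f z)} -> J (fglift f w).
Proof.
case=> J0 JD JZ _; rewrite fgliftE; elim: (dom w) => [|z zs IH] fJ; first by rewrite big_nil.
rewrite big_cons; apply: JD; first by apply/JZ/fJ/mem_head.
by apply: IH => y ys; apply: fJ; rewrite inE ys orbT.
Qed.

Lemma bilin_bt f s t : bilin f (bt s) (bt t) = f s t.
Proof. by rewrite /bilin /bt !liftU !scale1r. Qed.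

Lemma inAplus_Node a b s : inAplus (bt (Node a b s)).
Proof. by rewrite /inAplus /bt coeffU mul1r. Qed.

Lemma succ_t_graft_left a b s d r :
  succ_t K (Node a b s) (Node Leaf d r) = bt (Node (Node a b s) d r).
Proof. by rewrite /succ_t /= liftU scale1r. Qed.

Lemma prec_t_graft_right a c d r :
  prec_t K (Node a Leaf [::]) (Node c d r) = bt (Node a (Node c d r) [::]).
Proof. by rewrite /prec_t /= liftU scale1r. Qed.

Lemma dot_t_graft a b e s :
  dot_t K (Node a b [::]) (Node Leaf e s) = bt (Node a b (e :: s)).
Proof. by rewrite /dot_t; case: b => [|b1 b2 bs]; rewrite /= liftU scale1r. Qed.

Lemma gen_ideal_bt t : nonbinary t -> I (bt t).
Proof.
have [_ _ _ Iprod] := gen_ideal_tri.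
elim: t => // a IHa b IHb [|e s] abs; last first.
  by rewrite -dot_t_graft -bilin_bt => J _ gJ; apply: gJ; apply: inAplus_Node.
move: abs; rewrite /= orbF => /orP [a_nb | b_nb].
- case: a IHa a_nb => // c d r IHa a_nb.
  rewrite -succ_t_graft_left -bilin_bt.
  by case: (Iprod _ _ (or_intror (inAplus_Node Leaf b [::])) (or_introl (IHa a_nb))).
- case: b IHb b_nb => // b1 b2 bs IHb b_nb.
  rewrite -prec_t_graft_right -bilin_bt.
  by case: (Iprod _ _ (or_introl (inAplus_Node a Leaf [::])) (or_intror (IHb b_nb))).
Qed.

Lemma gen_idealP (v : A) : I v <-> v \in S.
Proof.
split=> [vI | /nonbinary_spanP vS].
- apply: (vI (fun v => v \in S)) => [|x y _ _]; first exact: tri_ideal_nonbinary_span.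
  by apply: rpred_bilin => s t _ _; apply: dot_t_nonbinary.
- rewrite -[v]fglift_freegU; apply: tri_ideal_fglift gen_ideal_tri _ => z /vS.
  exact: gen_ideal_bt.
Qed.

End GeneratedIdeal.

Section TensSum.
Variables (K : fieldType) (J : A K -> Prop).
Hypothesis JZ : forall k u, J u -> J (k *: u).

Lemma tens_sum0 : tens_sum J 0.
Proof. by exists [::]; rewrite big_nil. Qed.

Lemma tens_sumD w1 w2 : tens_sum J w1 -> tens_sum J w2 -> tens_sum J (w1 + w2).
Proof.
move=> [l1 [J1 ->]] [l2 [J2 ->]]; exists (l1 ++ l2); rewrite big_cat; split=> // p.
by rewrite mem_cat => /orP [/J1 | /J2].
Qed.

Lemma tens_sumZ k w : tens_sum J w -> tens_sum J (k *: w).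
Proof.
move=> [l [lJ ->]]; exists [seq (k *: p.1, p.2) | p <- l]; split.
- by move=> _ /mapP [p /lJ [p1J | p2J] ->]; [left; apply: JZ | right].
- by rewrite big_map scaler_sumr; apply: eq_bigr => p _; rewrite /tens fgliftZ.
Qed.

Lemma tens_sum_tens u v : J u \/ J v -> tens_sum J (tens u v).
Proof. by move=> uv; exists [:: (u, v)]; rewrite big_seq1; split=> // p /[1!inE] /eqP ->. Qed.

Lemma tens_sum_big (T : eqType) (r : seq T) (P : pred T) (F : T -> A2 K) :
  {in r, forall i, tens_sum J (F i)} -> tens_sum J (\sum_(i <- r | P i) F i).
Proof.
elim: r => [|i r IH] FJ; first by rewrite big_nil; apply: tens_sum0.
rewrite big_cons; have rJ : tens_sum J (\sum_(j <- r | P j) F j).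
  by apply: IH => j jr; apply: FJ; rewrite inE jr orbT.
by case: (P i) => //; apply: tens_sumD rJ; apply/FJ/mem_head.
Qed.

Lemma tens_sum_fglift (T : choiceType) (f : T -> A2 K) (w : {freeg T / K}) :
  {in dom w, forall z, tens_sum J (f z)} -> tens_sum J (fglift f w).
Proof. by move=> fJ; rewrite fgliftE; apply: tens_sum_big => z /fJ /tens_sumZ. Qed.

End TensSum.

Section Coproducts.
Variable K : fieldType.
Local Notation I := (@gen_ideal K).

Lemma cut_terms_tens_sum t (P : pred (ptree * seq ptree * bool)) : nonbinary t ->
  tens_sum I (\sum_(c <- cuts t | P c) tens (Gprod K c.1.2) (bt K c.1.1)).
Proof.
move=> /cuts_nonbinary /allP cutsN; apply: tens_sum_big => c /cutsN /orP [trunkN | cutoffN].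
- by apply: tens_sum_tens; right; apply/gen_idealP; rewrite bt_in_nonbinary_span.
- by apply: tens_sum_tens; left; apply/gen_idealP/Gprod_nonbinary.
Qed.

Lemma DeltaL_t_nonbinary t : nonbinary t -> tens_sum I (DeltaL_t K t).
Proof.
case: t => [//|a b s] abs; apply: tens_sumD; last exact: cut_terms_tens_sum.
by apply: tens_sum_tens; left; apply/gen_idealP; rewrite bt_in_nonbinary_span.
Qed.

Lemma DeltaR_t_nonbinary t : nonbinary t -> tens_sum I (DeltaR_t K t).
Proof. by case: t => [//|a b s]; apply: cut_terms_tens_sum. Qed.

End Coproducts.

Theorem mainTheorem17 (K : fieldType) :
  let I := @gen_ideal K in
  [/\ tri_ideal I,
      (forall v, I v -> eps v = 0),
      (forall v, I v -> tens_sum I (DeltaL v)) &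
      (forall v, I v -> tens_sum I (DeltaR v))].
Proof.
move=> I; have [_ _ IZ _] := @gen_ideal_tri K.
split=> [|v|v|v]; first exact: gen_ideal_tri.
all: move=> /gen_idealP /nonbinary_spanP vS.
- by apply: coeff_outdom; apply/negP => /vS.
- by apply: tens_sum_fglift => // z /vS; apply: DeltaL_t_nonbinary.
- by apply: tens_sum_fglift => // z /vS; apply: DeltaR_t_nonbinary.
Qed.
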